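(* Let $P\in\Delta$ and define $Q_0\in\Delta$ by $Q_0(x,y,z)=\frac{P(X=x,Y=y)P(X=x,Z=z)}{P(X=x)}$ if $P(X=x)>0$ and $Q_0(x,y,z)=0$ otherwise. Then $Q_0\in\Delta_P$, and $\widetilde{SI}(X:Y;Z)=0$ if and only if $MI_{Q_0}(Y:Z)=0$.
   Context: $X,Y,Z$ are random variables with finite state spaces $\mathcal X,\mathcal Y,\mathcal Z$. $\Delta$ denotes the set of all probability distributions on $\mathcal X\times\mathcal Y\times\mathcal Z$; $P\in\Delta$ is the joint distribution, and a subscript $Q$ means computed w.r.t. $Q\in\Delta$. $\Delta_P=\{Q\in\Delta: Q(X=x,Y=y)=P(X=x,Y=y)\text{ and }Q(X=x,Z=z)=P(X=x,Z=z)\ \forall x,y,z\}$. $CoI_Q(X;Y;Z)=MI_Q(X:Y)-MI_Q(X:Y|Z)$ and $\widetilde{SI}(X:Y;Z)=\max_{Q\in\Delta_P}CoI_Q(X;Y;Z)$. *)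

From mathcomp Require Import all_boot.
From Stdlib Require Import Reals ClassicalEpsilon.

Set Implicit Arguments.
Unset Strict Implicit.
Unset Printing Implicit Defensive.

Definition rsum (T : finType) (f : T -> R) : R := \big[Rplus/R0]_(t : T) f t.

Local Open Scope R_scope.
Section Info.
Variables (TX TY TZ : finType).

(* A joint distribution on X x Y x Z, as a function x y z |-> P(X=x,Y=y,Z=z). *)
Definition jdist := TX -> TY -> TZ -> R.

Definition is_dist (Q : jdist) : Prop :=
  (forall x y z, (0 <= Q x y z)%R) /\
  rsum (fun x => rsum (fun y => rsum (fun z => Q x y z))) = 1%R.

Definition mXY (Q : jdist) x y : R := rsum (fun z => Q x y z).
Definition mXZ (Q : jdist) x z : R := rsum (fun y => Q x y z).
Definition mYZ (Q : jdist) y z : R := rsum (fun x => Q x y z).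
Definition mX (Q : jdist) x : R := rsum (fun y => mXY Q x y).
Definition mY (Q : jdist) y : R := rsum (fun x => mXY Q x y).
Definition mZ (Q : jdist) z : R := rsum (fun x => mXZ Q x z).

Definition xlog (p r : R) : R := if Req_EM_T p 0 then 0%R else (p * ln r)%R.

Definition MI_XY (Q : jdist) : R :=
  rsum (fun x => rsum (fun y =>
    xlog (mXY Q x y) (mXY Q x y / (mX Q x * mY Q y)))).

Definition MI_YZ (Q : jdist) : R :=
  rsum (fun y => rsum (fun z =>
    xlog (mYZ Q y z) (mYZ Q y z / (mY Q y * mZ Q z)))).

Definition CMI_XY_Z (Q : jdist) : R :=
  rsum (fun x => rsum (fun y => rsum (fun z =>
    xlog (Q x y z) (Q x y z * mZ Q z / (mXZ Q x z * mYZ Q y z))))).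

Definition CoI (Q : jdist) : R := (MI_XY Q - CMI_XY_Z Q)%R.

Definition DeltaP (P Q : jdist) : Prop :=
  is_dist Q /\
  (forall x y, mXY Q x y = mXY P x y) /\
  (forall x z, mXZ Q x z = mXZ P x z).

Definition is_max_CoI (P : jdist) (v : R) : Prop :=
  (exists Q, DeltaP P Q /\ CoI Q = v) /\
  (forall Q, DeltaP P Q -> (CoI Q <= v)%R).

Definition SItilde (P : jdist) : R :=
  epsilon (inhabits 0%R) (fun v => is_max_CoI P v).

Definition Q0 (P : jdist) : jdist := fun x y z =>
  if Rlt_dec 0 (mX P x) then (mXY P x y * mXZ P x z / mX P x)%R else 0%R.

End Info.

(* Proof outline.
   - Q0 has the (X,Y)- and (X,Z)-marginals of P, so Q0 is in Delta_P.
   - On the support of Q0 the ratio defining MI(X:Y) factors as the product of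
     those defining MI(X:Y|Z) and MI(Y:Z); hence CoI_Q0 = MI_Q0(Y:Z).
   - The Gibbs inequality sum p ln(p/q) >= sum p - sum q (equality iff p = q)
     gives MI_Q0(Y:Z) >= 0, with equality only if Q0 makes Y and Z independent.
   - If it does, then for every Q in Delta_P, MI_Q(X:Y|Z) - MI_Q(X:Y) is the
     divergence of Q from a measure of mass <= 1, so Gibbs gives CoI_Q <= 0.
   - Delta_P is compact in R^(X x Y x Z) and CoI is continuous on it (the
     terms q ln q are controlled by 2 sqrt q near q = 0), so the maximum
     SI~ is attained.
   Then SI~ >= CoI_Q0 = MI_Q0(Y:Z) >= 0 gives one direction, and CoI <= 0 on
   Delta_P gives the other. *)

From HB Require Import structures.
From mathcomp Require Import all_boot all_order all_algebra.
From mathcomp Require Import all_classical all_reals all_analysis.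
From mathcomp Require Import Rstruct Rstruct_topology.
From Stdlib Require Import Reals Lra ClassicalEpsilon.
Import GRing.Theory Num.Theory.

Set Implicit Arguments.
Unset Strict Implicit.
Unset Printing Implicit Defensive.

Local Open Scope R_scope.

Section FiniteSums.
Variable A : finType.
Implicit Types (f g : A -> R) (c : R).

Lemma rsum_ext f g : (forall a, f a = g a) -> rsum f = rsum g.
Proof. by move=> fg; apply: eq_bigr => a _; apply: fg. Qed.

Lemma rsum0 : rsum (fun _ : A => 0) = 0.
Proof. exact: big1. Qed.

Lemma rsum_minus f g : rsum (fun a => f a - g a) = rsum f - rsum g.
Proof. exact: sumrB. Qed.

Lemma rsum_mulr f c : rsum f * c = rsum (fun a => f a * c).
Proof. exact: big_distrl. Qed.

Lemma rsum_mull f c : c * rsum f = rsum (fun a => c * f a).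
Proof. exact: big_distrr. Qed.

Lemma rsum_le f g : (forall a, f a <= g a) -> rsum f <= rsum g.
Proof. by move=> fg; apply/RleP/ler_sum => a _; apply/RleP. Qed.

Lemma rsum_ge0 f : (forall a, 0 <= f a) -> 0 <= rsum f.
Proof. by move=> f0; apply/RleP/sumr_ge0 => a _; apply/RleP. Qed.

Lemma le_rsum_term f a : (forall a, 0 <= f a) -> f a <= rsum f.
Proof.
move=> f0; rewrite /rsum (bigD1 a) //=; apply/RleP.
by rewrite lerDl; apply: sumr_ge0 => i _; apply/RleP.
Qed.

Lemma rsum_eq0 f : (forall a, 0 <= f a) -> rsum f = 0 -> forall a, f a = 0.
Proof. by move=> f0 s0 a; have := le_rsum_term a f0; have := f0 a; lra. Qed.
End FiniteSums.

Lemma rsum_exch (A B : finType) (f : A -> B -> R) :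
  rsum (fun a => rsum (fun b => f a b)) = rsum (fun b => rsum (fun a => f a b)).
Proof. exact: exchange_big. Qed.

Lemma rsum_pair (A B : finType) (f : A -> B -> R) :
  rsum (fun a => rsum (fun b => f a b)) = rsum (fun p : A * B => f p.1 p.2).
Proof. exact: pair_big. Qed.

Lemma ln_le_sub1 u : 0 < u -> ln u <= u - 1.
Proof. by move=> u0; have := exp_ineq1_le (ln u); rewrite exp_ln //; lra. Qed.

Lemma ln_lt_sub1 u : 0 < u -> u <> 1 -> ln u < u - 1.
Proof.
move=> u0 u1; have lnu0 : ln u <> 0 by move=> h; apply: u1; rewrite -(exp_ln u) // h exp_0.
by have := exp_ineq1 _ lnu0; rewrite exp_ln //; lra.
Qed.

Lemma ln_div a b : 0 < a -> 0 < b -> ln (a / b) = ln a - ln b.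
Proof. by move=> a0 b0; rewrite /Rdiv ln_mult ?ln_Rinv //; apply: Rinv_0_lt_compat. Qed.

(* With the convention / 0 = 0, a quotient of nonnegative reals is nonnegative. *)
Lemma div_ge0 a b : 0 <= a -> 0 <= b -> 0 <= a / b.
Proof.
move=> a0 b0; case: (Req_dec b 0) => [->|bn0]; first by rewrite /Rdiv Rinv_0 Rmult_0_r; lra.
by apply: Rmult_le_pos => //; apply/Rlt_le/Rinv_0_lt_compat; lra.
Qed.

Lemma gibbs_term p q : 0 <= p -> 0 <= q -> (0 < p -> 0 < q) ->
  p - q <= p * ln (p / q) /\ (p - q = p * ln (p / q) -> p = q).
Proof.
move=> p0 q0 pq; case: (Req_dec p 0) => [->|pn0]; first by rewrite Rmult_0_l; lra.
have {p0 pn0} p_pos : 0 < p by lra.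
have {q0 pq} q_pos := pq p_pos.
have qp0 : 0 < q / p by apply: Rdiv_lt_0_compat.
have lnpq : p * ln (p / q) = - (p * ln (q / p)) by rewrite !ln_div //; ring.
have pqp : p * (q / p - 1) = q - p by field; lra.
rewrite lnpq; split.
  by have := Rmult_le_compat_l _ _ _ (Rlt_le _ _ p_pos) (ln_le_sub1 qp0); lra.
move=> eq_pq; case: (Req_dec (q / p) 1) => [qp1|qpn1].
  by rewrite qp1 in pqp; lra.
by have := Rmult_lt_compat_l _ _ _ p_pos (ln_lt_sub1 qp0 qpn1); lra.
Qed.

Lemma gibbs (A : finType) (p q : A -> R) :
  (forall a, 0 <= p a) -> (forall a, 0 <= q a) -> (forall a, 0 < p a -> 0 < q a) ->
  rsum p - rsum q <= rsum (fun a => p a * ln (p a / q a)) /\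
  (rsum p - rsum q = rsum (fun a => p a * ln (p a / q a)) -> forall a, p a = q a).
Proof.
move=> p0 q0 pq.
pose d a := p a * ln (p a / q a) - (p a - q a).
have d0 a : 0 <= d a by have [h _] := gibbs_term (p0 a) (q0 a) (@pq a); rewrite /d; lra.
have sum_d : rsum d = rsum (fun a => p a * ln (p a / q a)) - (rsum p - rsum q).
  rewrite -!rsum_minus; apply: rsum_ext => a; rewrite /d; lra.
split; first by have := rsum_ge0 d0; lra.
move=> eq_sum a; have := rsum_eq0 d0 ltac:(lra) a.
by have [_ h] := gibbs_term (p0 a) (q0 a) (@pq a); rewrite /d => ?; apply: h; lra.
Qed.

Section Marginals.
Variables TX TY TZ : finType.
Implicit Types Q : jdist TX TY TZ.

Definition nonneg Q : Prop := forall x y z, 0 <= Q x y z.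
Definition mass Q : R := rsum (fun x => rsum (fun y => rsum (fun z => Q x y z))).

Lemma mX_XZ Q x : mX Q x = rsum (fun z => mXZ Q x z).
Proof. exact: rsum_exch. Qed.
Lemma mY_YZ Q y : mY Q y = rsum (fun z => mYZ Q y z).
Proof. exact: rsum_exch. Qed.
Lemma mZ_YZ Q z : mZ Q z = rsum (fun y => mYZ Q y z).
Proof. exact: rsum_exch. Qed.

Lemma mass_X Q : mass Q = rsum (mX Q).
Proof. by []. Qed.
Lemma mass_Y Q : mass Q = rsum (mY Q).
Proof. exact: rsum_exch. Qed.
Lemma mass_Z Q : mass Q = rsum (mZ Q).
Proof. by rewrite mass_X /mZ -rsum_exch; apply: rsum_ext => x; rewrite mX_XZ. Qed.
Lemma mass_YZ Q : mass Q = rsum (fun y => rsum (fun z => mYZ Q y z)).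
Proof. by rewrite mass_Y; apply: rsum_ext => y; rewrite mY_YZ. Qed.

Section Nonnegative.
Variable Q : jdist TX TY TZ.
Hypothesis Q_ge0 : nonneg Q.

Lemma mXY_ge0 x y : 0 <= mXY Q x y.
Proof. exact: rsum_ge0. Qed.
Lemma mXZ_ge0 x z : 0 <= mXZ Q x z.
Proof. by apply: rsum_ge0 => y; apply: Q_ge0. Qed.
Lemma mYZ_ge0 y z : 0 <= mYZ Q y z.
Proof. by apply: rsum_ge0 => x; apply: Q_ge0. Qed.
Lemma mX_ge0 x : 0 <= mX Q x.
Proof. by apply: rsum_ge0 => y; apply: mXY_ge0. Qed.
Lemma mY_ge0 y : 0 <= mY Q y.
Proof. by apply: rsum_ge0 => x; apply: mXY_ge0. Qed.
Lemma mZ_ge0 z : 0 <= mZ Q z.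
Proof. by apply: rsum_ge0 => x; apply: mXZ_ge0. Qed.

Lemma le_mXY x y z : Q x y z <= mXY Q x y.
Proof. exact: (le_rsum_term z (Q_ge0 x y)). Qed.
Lemma le_mXZ x y z : Q x y z <= mXZ Q x z.
Proof. by apply: (le_rsum_term (f := fun y => Q x y z) y) => ?; apply: Q_ge0. Qed.
Lemma le_mYZ x y z : Q x y z <= mYZ Q y z.
Proof. by apply: (le_rsum_term (f := fun x => Q x y z) x) => ?; apply: Q_ge0. Qed.
Lemma le_mX x y : mXY Q x y <= mX Q x.
Proof. exact: (le_rsum_term y (mXY_ge0 x)). Qed.
Lemma le_mY x y : mXY Q x y <= mY Q y.
Proof. by apply: (le_rsum_term (f := fun x => mXY Q x y) x) => ?; apply: mXY_ge0. Qed.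
Lemma le_mZ x z : mXZ Q x z <= mZ Q z.
Proof. by apply: (le_rsum_term (f := fun x => mXZ Q x z) x) => ?; apply: mXZ_ge0. Qed.
Lemma le_mYZ_mY y z : mYZ Q y z <= mY Q y.
Proof. by rewrite mY_YZ; apply: (le_rsum_term z (mYZ_ge0 y)). Qed.
Lemma le_mYZ_mZ y z : mYZ Q y z <= mZ Q z.
Proof. by rewrite mZ_YZ; apply: (le_rsum_term (f := fun y => mYZ Q y z) y) => ?; apply: mYZ_ge0. Qed.
Lemma le_mY_mass y : mY Q y <= mass Q.
Proof. by rewrite mass_Y; apply: le_rsum_term; apply: mY_ge0. Qed.

Lemma support_marginals x y z : 0 < Q x y z ->
  0 < mXY Q x y /\ 0 < mXZ Q x z /\ 0 < mYZ Q y z /\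
  0 < mX Q x /\ 0 < mY Q y /\ 0 < mZ Q z.
Proof.
move=> q0; have := le_mXY x y z; have := le_mXZ x y z; have := le_mYZ x y z.
have := le_mX x y; have := le_mY x y; have := le_mZ x z.
by repeat split; lra.
Qed.
End Nonnegative.

Section DeltaP.
Variables P Q : jdist TX TY TZ.
Hypothesis QP : DeltaP P Q.

Lemma DeltaP_ge0 : nonneg Q.
Proof. by case: QP => [[]]. Qed.
Lemma DeltaP_mass : mass Q = 1.
Proof. by case: QP => [[]]. Qed.
Lemma DeltaP_XY x y : mXY Q x y = mXY P x y.
Proof. by case: QP => _ []. Qed.
Lemma DeltaP_XZ x z : mXZ Q x z = mXZ P x z.
Proof. by case: QP => _ []. Qed.
Lemma DeltaP_X x : mX Q x = mX P x.
Proof. by apply: rsum_ext => y; apply: DeltaP_XY. Qed.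
Lemma DeltaP_Y y : mY Q y = mY P y.
Proof. by apply: rsum_ext => x; apply: DeltaP_XY. Qed.
Lemma DeltaP_Z z : mZ Q z = mZ P z.
Proof. by apply: rsum_ext => x; apply: DeltaP_XZ. Qed.
End DeltaP.

Lemma Q0_in_DeltaP (P : jdist TX TY TZ) : is_dist P -> DeltaP P (Q0 P).
Proof.
move=> [P_ge0 P_mass].
have Q0_ge0 : nonneg (Q0 P).
  move=> x y z; rewrite /Q0; case: Rlt_dec => hx; last exact: Rle_refl.
  apply: Rmult_le_pos; last by apply/Rlt_le/Rinv_0_lt_compat.
  by apply: Rmult_le_pos; [apply: mXY_ge0 | apply: mXZ_ge0].
have null_x x : ~ 0 < mX P x -> forall y z, P x y z = 0.
  move=> hx y z; have mX0 : mX P x = 0 by have := mX_ge0 P_ge0 x; lra.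
  have := le_mX P_ge0 x y; have := le_mXY P_ge0 x y z; have := P_ge0 x y z; lra.
have Q0_XY x y : mXY (Q0 P) x y = mXY P x y.
  change (rsum (fun z => Q0 P x y z) = mXY P x y).
  rewrite /Q0; case: (Rlt_dec 0 (mX P x)) => hx /=.
    transitivity (mXY P x y / mX P x * rsum (mXZ P x)).
      by rewrite [RHS]rsum_mull; apply: rsum_ext => z; rewrite /Rdiv; ring.
    by rewrite -mX_XZ; field; lra.
  by rewrite rsum0; apply: esym; rewrite -(rsum0 TZ); apply: rsum_ext; apply: null_x.
have Q0_XZ x z : mXZ (Q0 P) x z = mXZ P x z.
  change (rsum (fun y => Q0 P x y z) = mXZ P x z).
  rewrite /Q0; case: (Rlt_dec 0 (mX P x)) => hx /=.
    transitivity (mXZ P x z / mX P x * rsum (mXY P x)).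
      by rewrite [RHS]rsum_mull; apply: rsum_ext => y; rewrite /Rdiv; ring.
    by rewrite -/(mX P x); field; lra.
  rewrite rsum0; apply: esym; rewrite -(rsum0 TY); apply: rsum_ext => y.
  exact: null_x.
split; [split => // | by split].
by rewrite -P_mass; do 2 (apply: rsum_ext => ?); apply: Q0_XY.
Qed.
End Marginals.

Section Information.
Variables TX TY TZ : finType.
Implicit Types (P Q : jdist TX TY TZ) (F G : TX -> TY -> TZ -> R).

Definition rsum3 F : R := rsum (fun x => rsum (fun y => rsum (fun z => F x y z))).

Lemma rsum3_ext F G : (forall x y z, F x y z = G x y z) -> rsum3 F = rsum3 G.
Proof. by move=> FG; do 3 (apply: rsum_ext => ?); apply: FG. Qed.

Lemma rsum3_minus F G : rsum3 (fun x y z => F x y z - G x y z) = rsum3 F - rsum3 G.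
Proof.
rewrite /rsum3 -rsum_minus; apply: rsum_ext => x.
rewrite -rsum_minus; apply: rsum_ext => y; exact: rsum_minus.
Qed.

Lemma rsum3_pair F : rsum3 F = rsum (fun t : TX * (TY * TZ) => F t.1 t.2.1 t.2.2).
Proof.
rewrite -(rsum_pair (fun x (p : TY * TZ) => F x p.1 p.2)).
by apply: rsum_ext => x; rewrite rsum_pair.
Qed.

Definition ratio_XY Q x y : R := mXY Q x y / (mX Q x * mY Q y).
Definition ratio_YZ Q y z : R := mYZ Q y z / (mY Q y * mZ Q z).
Definition ratio_XY_Z Q x y z : R := Q x y z * mZ Q z / (mXZ Q x z * mYZ Q y z).

(* The convention 0 ln _ = 0 is already the value of the product 0 * ln _. *)
Lemma xlogE p r : xlog p r = p * ln r.
Proof. by rewrite /xlog; case: Req_EM_T => [e|_] //=; rewrite e Rmult_0_l. Qed.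

Lemma MI_XY_rsum3 Q : MI_XY Q = rsum3 (fun x y z => Q x y z * ln (ratio_XY Q x y)).
Proof.
apply: rsum_ext => x; apply: rsum_ext => y.
by rewrite xlogE /mXY rsum_mulr.
Qed.

Lemma MI_YZ_rsum3 Q : MI_YZ Q = rsum3 (fun x y z => Q x y z * ln (ratio_YZ Q y z)).
Proof.
rewrite /rsum3 rsum_exch; apply: rsum_ext => y; rewrite rsum_exch.
apply: rsum_ext => z.
by rewrite xlogE /mYZ rsum_mulr.
Qed.

Lemma CMI_rsum3 Q : CMI_XY_Z Q = rsum3 (fun x y z => Q x y z * ln (ratio_XY_Z Q x y z)).
Proof.
apply: rsum3_ext => x y z.
exact: xlogE.
Qed.

(* MI(X:Y) only depends on the (X,Y)-marginal, so it is constant on Delta_P. *)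
Lemma MI_XY_DeltaP P Q : DeltaP P Q -> MI_XY Q = MI_XY P.
Proof.
move=> QP; apply: rsum_ext => x; apply: rsum_ext => y.
by rewrite (DeltaP_X QP) (DeltaP_Y QP) (DeltaP_XY QP).
Qed.

(* Q0 is the product formula P(x,y) P(x,z) / P(x) everywhere, using 1/0 = 0. *)
Lemma Q0E P : nonneg P -> forall x y z, Q0 P x y z = mXY P x y * mXZ P x z / mX P x.
Proof.
move=> P_ge0 x y z; rewrite /Q0; case: Rlt_dec => //= hx.
have -> : mX P x = 0 by have := mX_ge0 P_ge0 x; lra.
by rewrite /Rdiv Rinv_0 Rmult_0_r.
Qed.

(* Under Q0, X:Y = X:Y|Z + Y:Z, since ratio_XY = ratio_XY_Z * ratio_YZ on its
   support; hence CoI_Q0 = MI_Q0(Y:Z). *)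
Lemma CoI_Q0 P : is_dist P -> CoI (Q0 P) = MI_YZ (Q0 P).
Proof.
move=> hP; have hD := Q0_in_DeltaP hP; set Q := Q0 P in hD *.
have Q_ge0 := DeltaP_ge0 hD.
rewrite /CoI MI_XY_rsum3 CMI_rsum3 MI_YZ_rsum3 -rsum3_minus; apply: rsum3_ext => x y z.
case: (Req_dec (Q x y z) 0) => [->|qn0]; first ring.
have q0 : 0 < Q x y z by have := Q_ge0 x y z; lra.
have [pXY [pXZ [pYZ [pX [pY pZ]]]]] := support_marginals Q_ge0 q0.
have QE : Q x y z = mXY Q x y * mXZ Q x z / mX Q x.
  by rewrite /Q Q0E ?(DeltaP_XY hD) ?(DeltaP_XZ hD) ?(DeltaP_X hD) //; case: hP.
have split_ratio : ratio_XY Q x y = ratio_XY_Z Q x y z * ratio_YZ Q y z.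
  by rewrite /ratio_XY /ratio_XY_Z /ratio_YZ QE; field; repeat split; lra.
have pA : 0 < ratio_XY_Z Q x y z by apply: Rdiv_lt_0_compat; nra.
have pC : 0 < ratio_YZ Q y z by apply: Rdiv_lt_0_compat; nra.
by rewrite split_ratio ln_mult //; ring.
Qed.

(* Gibbs on the (Y,Z)-marginal: MI(Y:Z) >= 0, and it vanishes only when
   the (Y,Z)-marginal is the product of the Y- and Z-marginals. *)
Lemma MI_YZ_ge0_eq0 Q : is_dist Q ->
  0 <= MI_YZ Q /\ (MI_YZ Q = 0 -> forall y z, mYZ Q y z = mY Q y * mZ Q z).
Proof.
move=> [Q_ge0 Q_mass]; change (mass Q = 1) in Q_mass.
pose p (t : TY * TZ) := mYZ Q t.1 t.2.
pose q (t : TY * TZ) := mY Q t.1 * mZ Q t.2.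
have p0 t : 0 <= p t by apply: mYZ_ge0.
have q0 t : 0 <= q t by apply: Rmult_le_pos; [apply: mY_ge0 | apply: mZ_ge0].
have pq t : 0 < p t -> 0 < q t.
  move=> pt0; have := le_mYZ_mY Q_ge0 t.1 t.2; have := le_mYZ_mZ Q_ge0 t.1 t.2.
  by rewrite /p /q in pt0 *; move=> ? ?; apply: Rmult_lt_0_compat; lra.
have sum_p : rsum p = 1 by rewrite -(rsum_pair (mYZ Q)) -mass_YZ.
have sum_q : rsum q = 1.
  rewrite -(rsum_pair (fun y z => mY Q y * mZ Q z)).
  transitivity (rsum (mY Q) * rsum (mZ Q)).
    by rewrite rsum_mulr; apply: rsum_ext => y; rewrite rsum_mull.
  by rewrite -mass_Y -mass_Z Q_mass Rmult_1_r.
have MI_pq : MI_YZ Q = rsum (fun t => p t * ln (p t / q t)).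
  rewrite -(rsum_pair (fun y z => p (y, z) * ln (p (y, z) / q (y, z)))).
  apply: rsum_ext => y; apply: rsum_ext => z.
  exact: xlogE.
have [G1 G2] := gibbs p0 q0 pq.
rewrite MI_pq; split; first lra.
by move=> MI0 y z; apply: (G2 _ (y, z)); lra.
Qed.
End Information.

(* The reference measure Q0(x,y,z) Q(y,z) / (P(y) P(z)) attached to Q in Delta_P.
   The gap MI_Q(X:Y|Z) - MI_Q(X:Y) is the divergence of Q from it, and it has mass
   at most 1 as soon as Q0 makes Y and Z independent. *)
Definition indep_ref (TX TY TZ : finType) (P Q : jdist TX TY TZ) x y z : R :=
  Q0 P x y z * (mYZ Q y z / (mY P y * mZ P z)).

Section CoI_nonpositive.
Variables (TX TY TZ : finType) (P Q : jdist TX TY TZ).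
Hypotheses (hP : is_dist P) (QP : DeltaP P Q).

Let Q_ge0 : nonneg Q := DeltaP_ge0 QP.

Lemma indep_ref_ge0 x y z : 0 <= indep_ref P Q x y z.
Proof.
apply: Rmult_le_pos; first exact: (DeltaP_ge0 (Q0_in_DeltaP hP)).
have P_ge0 : nonneg P by case: hP.
apply: div_ge0; first exact: mYZ_ge0.
by apply: Rmult_le_pos; [apply: mY_ge0 | apply: mZ_ge0].
Qed.

Lemma indep_ref_pos x y z : 0 < Q x y z -> 0 < indep_ref P Q x y z.
Proof.
move=> q0; have [pXY [pXZ [pYZ [pX [pY pZ]]]]] := support_marginals Q_ge0 q0.
rewrite (DeltaP_XY QP) (DeltaP_XZ QP) (DeltaP_X QP) (DeltaP_Y QP) (DeltaP_Z QP) in pXY pXZ pX pY pZ.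
rewrite /indep_ref Q0E; last by case: hP.
by apply: Rmult_lt_0_compat; apply: Rdiv_lt_0_compat; nra.
Qed.

Lemma CMI_sub_MI_XY : CMI_XY_Z Q - MI_XY Q =
  rsum3 (fun x y z => Q x y z * ln (Q x y z / indep_ref P Q x y z)).
Proof.
rewrite CMI_rsum3 MI_XY_rsum3 -rsum3_minus; apply: rsum3_ext => x y z.
case: (Req_dec (Q x y z) 0) => [->|qn0]; first ring.
have q0 : 0 < Q x y z by have := Q_ge0 x y z; lra.
have [pXY [pXZ [pYZ [pX [pY pZ]]]]] := support_marginals Q_ge0 q0.
have pA : 0 < ratio_XY_Z Q x y z by apply: Rdiv_lt_0_compat; nra.
have pB : 0 < ratio_XY Q x y by apply: Rdiv_lt_0_compat; nra.
rewrite -Rmult_minus_distr_l -ln_div //; congr (_ * ln _).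
rewrite /indep_ref Q0E; last by case: hP.
rewrite -(DeltaP_XY QP) -(DeltaP_XZ QP) -(DeltaP_X QP) -(DeltaP_Y QP) -(DeltaP_Z QP).
by rewrite /ratio_XY_Z /ratio_XY; field; repeat split; lra.
Qed.

Lemma mass_indep_ref : (forall y z, mYZ (Q0 P) y z = mY P y * mZ P z) ->
  rsum3 (indep_ref P Q) <= 1.
Proof.
move=> Q0_indep; rewrite -(DeltaP_mass QP) mass_YZ.
rewrite /rsum3 rsum_exch; apply: rsum_le => y; rewrite rsum_exch; apply: rsum_le => z.
rewrite /indep_ref -rsum_mulr -/(mYZ (Q0 P) y z) Q0_indep.
rewrite -(DeltaP_Y QP) -(DeltaP_Z QP).
have := mYZ_ge0 Q_ge0 y z; case: (Req_dec (mY Q y * mZ Q z) 0) => [->|n0 ?].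
  by rewrite Rmult_0_l.
by apply: Req_le; field; split => h0; apply: n0; rewrite h0; ring.
Qed.

Lemma CoI_le0 : (forall y z, mYZ (Q0 P) y z = mY P y * mZ P z) -> CoI Q <= 0.
Proof.
move=> Q0_indep.
have [gibbs_le _] := @gibbs (TX * (TY * TZ))%type
  (fun t => Q t.1 t.2.1 t.2.2) (fun t => indep_ref P Q t.1 t.2.1 t.2.2)
  (fun t => Q_ge0 _ _ _) (fun t => indep_ref_ge0 _ _ _) (fun t => @indep_ref_pos _ _ _).
rewrite -!rsum3_pair -(rsum3_pair (fun x y z => Q x y z * ln (Q x y z / indep_ref P Q x y z)))
  -CMI_sub_MI_XY in gibbs_le.
have mass_Q : rsum3 Q = 1 := DeltaP_mass QP.
by have := mass_indep_ref Q0_indep; rewrite /CoI; lra.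
Qed.
End CoI_nonpositive.

Lemma DeltaP_bounds (TX TY TZ : finType) (P Q : jdist TX TY TZ) : DeltaP P Q ->
  forall x y z, 0 <= Q x y z /\ Q x y z <= mYZ Q y z /\ mYZ Q y z <= 1 /\
                Q x y z <= mXZ P x z.
Proof.
move=> QP x y z; have Q_ge0 := DeltaP_ge0 QP.
have := le_mYZ_mY Q_ge0 y z; have := le_mY_mass Q_ge0 y; have := DeltaP_mass QP.
have := le_mYZ Q_ge0 x y z; have := le_mXZ Q_ge0 x y z; rewrite (DeltaP_XZ QP).
by have := Q_ge0 x y z; repeat split; lra.
Qed.

(* Real bounds on x ln x, used near the boundary of the support. *)
Lemma xlnx_bound q : 0 < q -> - (q * ln q) <= 2 * sqrt q.
Proof.
move=> q0; set w := sqrt q.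
have w0 : 0 < w by apply: sqrt_lt_R0.
have ww : w * w = q by apply: sqrt_sqrt; lra.
have lnw := ln_le_sub1 (Rinv_0_lt_compat _ w0); rewrite ln_Rinv // in lnw.
have lnq : ln q = ln w + ln w by rewrite -ww ln_mult.
have ww' : w * w * / w = w by field; lra.
rewrite lnq -ww; have : w * w * (- ln w) <= w * w * (/ w - 1) by apply: Rmult_le_compat_l; nra.
nra.
Qed.

Lemma term_bound q m c d : 0 < d -> 0 < c -> 0 <= q -> q <= m -> m <= 1 ->
  Rabs (q * ln (q * c / (d * m))) <= 2 * sqrt q + q * Rabs (ln (c / d)).
Proof.
move=> d0 c0 q0 qm m1; case: (Req_dec q 0) => [->|qn0].
  by rewrite Rmult_0_l Rabs_R0 sqrt_0; lra.
have {q0 qn0} q_pos : 0 < q by lra.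
have m0 : 0 < m by lra.
have qm0 : 0 < q / m by apply: Rdiv_lt_0_compat.
have cd0 : 0 < c / d by apply: Rdiv_lt_0_compat.
have -> : q * c / (d * m) = (q / m) * (c / d) by field; lra.
rewrite ln_mult // Rmult_plus_distr_l.
have lnm : ln m <= 0 by have := ln_le_sub1 m0; lra.
have lnqm : ln (q / m) <= 0.
  have : q / m <= 1 by apply: (Rmult_le_reg_r m) => //; field_simplify; lra.
  by have := ln_le_sub1 qm0; lra.
have xlnx := xlnx_bound q_pos.
have abs1 : Rabs (q * ln (q / m)) <= 2 * sqrt q.
  by rewrite Rabs_left1; [rewrite ln_div //; nra | nra].
have abs2 : Rabs (q * ln (c / d)) = q * Rabs (ln (c / d)).
  by rewrite Rabs_mult Rabs_right //; lra.
by have := Rabs_triang (q * ln (q / m)) (q * ln (c / d)); lra.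
Qed.

Section Limits.
Local Open Scope classical_set_scope.
Context {U : Type} (F : set_system U) {FF : Filter F}.

Lemma cvg_rsum (A : finType) (h : A -> U -> R) (l : A -> R) :
  (forall a, h a @ F --> l a) -> (fun u => rsum (fun a => h a u)) @ F --> rsum l.
Proof.
move=> h_cvg; rewrite /rsum; elim: (index_enum A) => [|a s IH].
  by under eq_fun do rewrite big_nil; rewrite big_nil; apply: cvg_cst.
under eq_fun do rewrite big_cons; rewrite big_cons.
exact: (@cvgD _ R^o).
Qed.

Lemma term_cvg_pos (qf mf : U -> R) q0 m0 c d :
  0 < d -> 0 < c -> 0 < q0 -> 0 < m0 -> qf @ F --> q0 -> mf @ F --> m0 ->
  (fun u => qf u * ln (qf u * c / (d * mf u))) @ F --> q0 * ln (q0 * c / (d * m0)).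
Proof.
move=> d0 c0 q_pos m_pos q_cvg m_cvg.
have ratio_cvg : (fun u => qf u * c / (d * mf u)) @ F --> q0 * c / (d * m0).
  apply: cvgM; first exact: cvgMr_tmp.
  apply: cvgV; last exact: cvgMl_tmp.
  by apply/eqP => dm0; change (d * m0 = 0) in dm0; nra.
apply: cvgM => //; apply: continuous_cvg => //.
apply/continuity_pt_cvg/derivable_continuous_pt.
by exists (/ (q0 * c / (d * m0))); apply: derivable_pt_lim_ln; apply: Rdiv_lt_0_compat; nra.
Qed.

Lemma term_cvg_zero (qf mf : U -> R) c d :
  0 < d -> 0 < c -> qf @ F --> 0 ->
  (\forall u \near F, 0 <= qf u /\ qf u <= mf u /\ mf u <= 1) ->
  (fun u => qf u * ln (qf u * c / (d * mf u))) @ F --> 0.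
Proof.
move=> d0 c0 q_cvg bounds.
pose bound u := 2 * sqrt (qf u) + qf u * Rabs (ln (c / d)).
have bound_cvg : bound @ F --> 0.
  have sqrt_cvg : (fun u => sqrt (qf u)) @ F --> sqrt 0.
    apply: continuous_cvg => //; apply/continuity_pt_cvg/continuity_pt_sqrt; lra.
  have -> : 0 = 2 * sqrt 0 + 0 * Rabs (ln (c / d)) by rewrite sqrt_0; ring.
  by apply: (@cvgD _ R^o); [apply: cvgMl_tmp | apply: cvgMr_tmp].
apply: (@squeeze_cvgr _ _ _ _ (fun u => - bound u) bound); last exact: bound_cvg.
  apply: filterS bounds => u [q_ge0 [qm m1]].
  have := term_bound d0 c0 q_ge0 qm m1; rewrite -/(bound u) => abs_le.
  have := Rle_abs (qf u * ln (qf u * c / (d * mf u))).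
  have := Rle_abs (- (qf u * ln (qf u * c / (d * mf u)))); rewrite Rabs_Ropp.
  by move=> ? ?; apply/andP; split; apply/RleP; lra.
have -> : 0 = - 0 by ring.
exact: (@cvgN _ R^o).
Qed.
End Limits.

Lemma rsum_continuous {T : topologicalType} (A : finType) (h : A -> T -> R) :
  (forall a, continuous (h a)) -> continuous (fun u => rsum (fun a => h a u)).
Proof. by move=> h_cont u; apply: cvg_rsum => a; apply: h_cont. Qed.

Lemma closure_preimage {T : topologicalType} (A : set T) (g : T -> R) (C : set R) :
  continuous g -> closed C -> (forall u, A u -> C (g u)) ->
  forall u, closure A u -> C (g u).
Proof.
move=> g_cont C_closed AC u Au.
have gC_closed : closed (g @^-1` C) by apply: preimage_closed => // v _; apply: g_cont.
by have := closureS AC Au; rewrite -(proj1 (closure_id _) gC_closed).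
Qed.

(* Existence of a maximiser of CoI over Delta_P: Delta_P is a compact subset of
   R^(X x Y x Z), and on it MI(X:Y) is constant while MI(X:Y|Z) is continuous. *)
Section MaximumExists.
Local Open Scope classical_set_scope.
Variables (TX TY TZ : finType) (P : jdist TX TY TZ).
Hypothesis hP : is_dist P.

Let S := {ptws (TX * TY * TZ)%type -> R}.

Definition of_point (f : S) : jdist TX TY TZ := fun x y z => f (x, y, z).

Let DeltaP_pts : set S := [set f | DeltaP P (of_point f)].

Lemma coord_continuous x y z : continuous (fun f : S => of_point f x y z).
Proof. exact: (@proj_continuous _ (fun _ => R) (x, y, z)). Qed.

Lemma DeltaP_pts_closed : closed DeltaP_pts.
Proof.
move=> f f_cl.
have keep_eq (g : S -> R) c : continuous g -> (forall h, DeltaP_pts h -> g h = c) -> g f = c.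
  by move=> g_cont gK; exact: (closure_preimage g_cont (closed_eq (y := c)) gK f_cl).
split; [split|split].
- move=> x y z.
  have K_ge0 h : DeltaP_pts h -> [set r : R | 0 <= r]%O (of_point h x y z).
    by move=> hK; apply/RleP; apply: (DeltaP_ge0 hK).
  by apply/RleP; exact: (closure_preimage (@coord_continuous x y z) (closed_ge (y := 0)) K_ge0 f_cl).
- apply: (keep_eq (fun g => mass (of_point g))); last by move=> h; apply: DeltaP_mass.
  by do 3 (apply: rsum_continuous => ?); apply: coord_continuous.
- move=> x y; apply: (keep_eq (fun g => mXY (of_point g) x y)); last first.
    by move=> h hK; apply: DeltaP_XY.
  by apply: rsum_continuous => ?; apply: coord_continuous.
- move=> x z; apply: (keep_eq (fun g => mXZ (of_point g) x z)); last first.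
    by move=> h hK; apply: DeltaP_XZ.
  by apply: rsum_continuous => ?; apply: coord_continuous.
Qed.

Lemma DeltaP_pts_compact : compact.compact DeltaP_pts.
Proof.
have cube_compact := @tychonoff (TX * TY * TZ)%type (fun _ => R)
  (fun _ => `[R0, R1]%classic) (fun _ => @segment_compact R R0 R1).
apply: (subclosed_compact DeltaP_pts_closed cube_compact) => f fK [[x y] z] /=.
have [q0 [qm [m1 _]]] := DeltaP_bounds fK x y z.
by rewrite in_itv /=; apply/andP; split; apply/RleP; change (f (x, y, z)) with (of_point f x y z); lra.
Qed.

(* On Delta_P, MI(X:Y|Z) is a sum of terms in which only Q(x,y,z) and Q(y,z) vary. *)
Definition CMI_term (f : S) x y z : R :=
  of_point f x y z * ln (of_point f x y z * mZ P z / (mXZ P x z * mYZ (of_point f) y z)).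

Definition CMI_point (f : S) : R := rsum3 (CMI_term f).

Lemma CMI_point_eq f : DeltaP_pts f -> CMI_point f = CMI_XY_Z (of_point f).
Proof.
move=> fK; rewrite CMI_rsum3; apply: rsum3_ext => x y z.
by rewrite /CMI_term /ratio_XY_Z (DeltaP_Z fK) (DeltaP_XZ fK).
Qed.

Lemma CMI_term_cvg f0 x y z : DeltaP_pts f0 ->
  (fun f => CMI_term f x y z) @ within DeltaP_pts (nbhs f0) --> CMI_term f0 x y z.
Proof.
move=> f0K; have P_ge0 : nonneg P by case: hP.
have inK : within DeltaP_pts (nbhs f0) DeltaP_pts.
  by rewrite /within /=; apply: filterE => f fK; exact: fK.
have q_cvg : (fun f : S => of_point f x y z) @ within DeltaP_pts (nbhs f0) -->
             of_point f0 x y z.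
  by apply: cvg_within_filter; apply: coord_continuous.
have m_cvg : (fun f : S => mYZ (of_point f) y z) @ within DeltaP_pts (nbhs f0) -->
             mYZ (of_point f0) y z.
  by apply: cvg_within_filter; apply: rsum_continuous => ?; apply: coord_continuous.
have [q0 [qm [m1 qd]]] := DeltaP_bounds f0K x y z.
case: (Req_dec (mXZ P x z) 0) => [d0|dn0].
  (* Q(x,y,z) <= P(x,z) = 0 throughout Delta_P. *)
  have vanish : forall f, DeltaP_pts f -> CMI_term f x y z = 0.
    move=> f fK; have := DeltaP_bounds fK x y z; rewrite /CMI_term => -[? [_ [_ ?]]].
    have -> : of_point f x y z = 0 by lra.
    by rewrite Rmult_0_l.
  by rewrite (vanish f0 f0K); apply: cvg_near_cst; apply: filterS inK.
have d_pos : 0 < mXZ P x z by have := mXZ_ge0 P_ge0 x z; lra.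
have c_pos : 0 < mZ P z by have := le_mZ P_ge0 x z; lra.
case: (Req_dec (of_point f0 x y z) 0) => [q00|qn0].
  rewrite /CMI_term q00 Rmult_0_l; apply: term_cvg_zero => //; first by rewrite -q00.
  by apply: filterS inK => f fK; have := DeltaP_bounds fK x y z; tauto.
by apply: term_cvg_pos => //; lra.
Qed.

Lemma CMI_point_continuous : {within DeltaP_pts, continuous CMI_point}.
Proof.
apply/subspace_continuousP => f0 f0K.
by do 3 (apply: cvg_rsum => ?); apply: CMI_term_cvg.
Qed.

Lemma exists_max_CoI :
  exists Q, DeltaP P Q /\ forall Q', DeltaP P Q' -> CoI Q' <= CoI Q.
Proof.
have K_ne : DeltaP_pts !=set0.
  by exists (fun t => Q0 P t.1.1 t.1.2 t.2); apply: Q0_in_DeltaP.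
have [f fK f_min] := compact_EVT_min K_ne DeltaP_pts_compact CMI_point_continuous.
have {}fK : DeltaP_pts f by rewrite inE in fK.
exists (of_point f); split => // Q' Q'P.
pose f' : S := fun t => Q' t.1.1 t.1.2 t.2.
have f'K : DeltaP_pts f' := Q'P.
have -> : Q' = of_point f' by [].
have := f_min f' (mem_set f'K); rewrite !CMI_point_eq // => /RleP.
by rewrite /CoI (MI_XY_DeltaP f'K) (MI_XY_DeltaP fK); lra.
Qed.
End MaximumExists.

Lemma SItilde_max (TX TY TZ : finType) (P : jdist TX TY TZ) :
  is_dist P -> is_max_CoI P (SItilde P).
Proof.
move=> hP; apply: epsilon_spec.
have [Q [QP Q_max]] := exists_max_CoI hP.
by exists (CoI Q); split => //; exists Q.
Qed.

Theorem mainTheorem6 (TX TY TZ : finType) (P : jdist TX TY TZ) (hP : is_dist P) :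
  DeltaP P (Q0 P) /\ (SItilde P = 0%R <-> MI_YZ (Q0 P) = 0%R).
Proof.
have Q0P := Q0_in_DeltaP hP.
split => //.
have [[Qm [QmP SI_val]] SI_ge] := SItilde_max hP.
have [MI_ge0 MI_eq0] := MI_YZ_ge0_eq0 Q0P.1.
have Q0_indep : MI_YZ (Q0 P) = 0 -> forall y z, mYZ (Q0 P) y z = mY P y * mZ P z.
  by move=> MI0 y z; rewrite (MI_eq0 MI0) (DeltaP_Y Q0P) (DeltaP_Z Q0P).
have CoI_Q0_le := SI_ge _ Q0P; rewrite CoI_Q0 // in CoI_Q0_le.
split => [SI0 | MI0]; first lra.
by have := CoI_le0 hP QmP (Q0_indep MI0); lra.
Qed.
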